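(* Let $\lambda>0$, $n_{\rm eff}>1$, $D_1>0$ and $D_2\ge 0$ be real numbers, and let $n\ge 1$ be an integer. Define $f(x)=\left(x^2+D_1\right)^{1/2}+n_{\rm eff}\,(x+D_2)$, let $\delta=f(0)\bmod\lambda\in[0,\lambda)$, and set $$k_n^*=\frac{f(0)-\delta}{\lambda}+\left\lceil \frac{\delta}{\lambda}\right\rceil+(n-1).$$ If $\Delta^*\ge 0$ is a real number satisfying $\left((\Delta^* )^2+D_1\right)^{1/2}+n_{\rm eff}\,(D_2+\Delta^* )=k_n^*\lambda$, then $\Delta^*<n\lambda$.
   Context: This arises in placing the $n$-th pinching antenna on a dielectric waveguide: $\lambda$ is the carrier wavelength, $n_{\rm eff}$ the effective refractive index of the waveguide, $D_1=y_m^2+d^2$ (with $d>0$ the waveguide height and $(x_m,y_m,0)$ the user location), $D_2=L+x_m\ge 0$, and $\Delta^*$ is the (nonnegative) offset of the antenna from the point on the waveguide closest to the user. $\lceil a\rceil$ denotes the ceiling of $a$. *)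

From Stdlib Require Import Reals.
Open Scope R_scope.

(* floor: Stdlib's Int_part x = up x - 1 is the floor of x *)
Definition Rfloor (x : R) : R := IZR (Int_part x).
Definition Rceil (x : R) : R := - Rfloor (- x).
Definition Rmod (a b : R) : R := a - b * Rfloor (a / b).

Definition f_pin (D1 D2 neff x : R) : R := sqrt (x ^ 2 + D1) + neff * (x + D2).

(* Rounding f(0) up to a multiple of lambda adds less than lambda, so
   k_n* lambda < f(0) + n lambda.  On the other hand
   f(x) >= f(0) + n_eff x >= f(0) + x for x >= 0, hence Delta* < n lambda. *)

From Stdlib Require Import Reals Lra.
Open Scope R_scope.

Lemma Rceil_lt (x : R) : Rceil x < x + 1.
Proof.
  unfold Rceil, Rfloor.
  destruct (base_Int_part (- x)) as [_ Hfloor].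
  lra.
Qed.

Lemma Rceil_quotient_bound (a d l m : R) : 0 < l ->
  ((a - d) / l + Rceil (d / l) + m) * l < a + (m + 1) * l.
Proof.
  intros Hl.
  assert (Hceil : Rceil (d / l) * l < (d / l + 1) * l)
    by (apply Rmult_lt_compat_r; [lra | apply Rceil_lt]).
  replace (((a - d) / l + Rceil (d / l) + m) * l)
    with (a - d + Rceil (d / l) * l + m * l) by (field; lra).
  replace ((d / l + 1) * l) with (d + l) in Hceil by (field; lra).
  lra.
Qed.

Lemma f_pin_ge_shift (D1 D2 neff x : R) :
  f_pin D1 D2 neff 0 + neff * x <= f_pin D1 D2 neff x.
Proof.
  unfold f_pin.
  assert (Hsqrt : sqrt (0 ^ 2 + D1) <= sqrt (x ^ 2 + D1)).
  { apply sqrt_le_1_alt. pose proof (pow2_ge_0 x). simpl. lra. }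
  lra.
Qed.

Theorem proposition2 (lambda neff D1 D2 : R) (n : nat) (Delta : R) :
  0 < lambda -> 1 < neff -> 0 < D1 -> 0 <= D2 -> (1 <= n)%nat ->
  let delta := Rmod (f_pin D1 D2 neff 0) lambda in
  let kn := (f_pin D1 D2 neff 0 - delta) / lambda + Rceil (delta / lambda)
            + (INR n - 1) in
  0 <= Delta ->
  sqrt (Delta ^ 2 + D1) + neff * (D2 + Delta) = kn * lambda ->
  Delta < INR n * lambda.
Proof.
  intros Hl Hneff _ _ _ delta kn HDelta Hphase.
  assert (Hkn : kn * lambda < f_pin D1 D2 neff 0 + INR n * lambda).
  { unfold kn. replace (INR n) with (INR n - 1 + 1) at 2 by ring.
    apply Rceil_quotient_bound; exact Hl. }
  assert (Hf : f_pin D1 D2 neff Delta = kn * lambda).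
  { rewrite <- Hphase. unfold f_pin. ring. }
  pose proof (f_pin_ge_shift D1 D2 neff Delta) as Hgrowth.
  assert (Hstretch : Delta <= neff * Delta) by nra.
  lra.
Qed.
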